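(* Let $\mathcal{H}$ be a family of $h$ halfspaces in $\mathbb{R}^d$ and let $k$ be a positive integer. Suppose that for some positive integer $t$ there exists an integer $m$ with the following property: the $t$-tuples of every finite point set $S\subset\mathbb{R}^d$ can be $k$-colored such that every $\mathcal{H}$-region that contains at least $m$ points of $S$ contains a $t$-tuple of each of the $k$ colors. Then for every integer $t'>t$, with $m'=m+t'-t$, the $t'$-tuples of every finite point set $S\subset\mathbb{R}^d$ can be $k$-colored such that every $\mathcal{H}$-region that contains at least $m'$ points of $S$ contains a $t'$-tuple of each of the $k$ colors.
   Context: Given a finite family of halfspaces $\mathcal{H}=\{H_1,\dots,H_h\}$ in $\mathbb{R}^d$, a region $R$ is an $\mathcal{H}$-region if it is the intersection of finitely many halfspaces, each of which is a translate of one of the halfspaces in $\mathcal{H}$. A $t$-tuple of points of $S$ is an unordered $t$-element subset of $S$; a region contains it if it contains all its points. *)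

From HB Require Import structures.
From mathcomp Require Import all_boot all_order all_algebra.
From mathcomp Require Import finmap.
From mathcomp Require Import reals.
Set Implicit Arguments. Unset Strict Implicit. Unset Printing Implicit Defensive.
Import Order.TTheory GRing.Theory Num.Theory.
Local Open Scope ring_scope.
Local Open Scope fset_scope.

(* A halfspace of R^d: { x | <a,x> <= b } (closed) or { x | <a,x> < b } (open),
   with nonzero normal vector a. *)
Record halfspace (R : realType) (d : nat) := Halfspace {
  hs_normal : 'rV[R]_d;
  hs_strict : bool;
  hs_bound  : R }.

Definition dotv (R : realType) (d : nat) (a x : 'rV[R]_d) : R :=
  \sum_(j < d) a ord0 j * x ord0 j.

Definition in_hs (R : realType) (d : nat) (H : halfspace R d) (x : 'rV[R]_d) : bool :=
  if hs_strict H then dotv (hs_normal H) x < hs_bound H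
  else dotv (hs_normal H) x <= hs_bound H.

Definition proper_hs (R : realType) (d : nat) (H : halfspace R d) : Prop :=
  hs_normal H != 0.

(* An H-region is described by a finite list of pairs (i, v): the translate of
   the halfspace H_i by the vector v, i.e. { x | x - v \in H_i }; the region is
   the intersection of these translates. *)
Definition in_translate (R : realType) (d : nat) (H : halfspace R d)
  (v x : 'rV[R]_d) : bool := in_hs H (x - v).

Definition in_region (R : realType) (d h : nat) (Hs : 'I_h -> halfspace R d)
  (reg : seq ('I_h * 'rV[R]_d)) (x : 'rV[R]_d) : bool :=
  all (fun p => in_translate (Hs p.1) p.2 x) reg.

Definition pts_in (R : realType) (d h : nat) (Hs : 'I_h -> halfspace R d)
  (reg : seq ('I_h * 'rV[R]_d)) (S : {fset 'rV[R]_d}) : {fset 'rV[R]_d} :=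
  [fset x in S | in_region Hs reg x].

Definition good_coloring (R : realType) (d h : nat) (Hs : 'I_h -> halfspace R d)
  (k t : nat) (m : int) (S : {fset 'rV[R]_d}) (col : {fset 'rV[R]_d} -> 'I_k) : Prop :=
  forall reg : seq ('I_h * 'rV[R]_d),
    (m <= (#|` pts_in Hs reg S|)%:Z)%R ->
    forall c : 'I_k, exists T : {fset 'rV[R]_d},
      [/\ T `<=` S, #|` T| = t, {in T, forall x, in_region Hs reg x} & col T = c].

Definition coloring_property (R : realType) (d h : nat) (Hs : 'I_h -> halfspace R d)
  (k t : nat) (m : int) : Prop :=
  forall S : {fset 'rV[R]_d}, exists col : {fset 'rV[R]_d} -> 'I_k,
    @good_coloring R d h Hs k t m S col.

From mathcomp Require Import all_boot all_order all_algebra.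
From mathcomp Require Import finmap reals.
From mathcomp Require Import zify ring lra.
Set Implicit Arguments. Unset Strict Implicit. Unset Printing Implicit Defensive.
Import Order.TTheory GRing.Theory Num.Theory.
Local Open Scope fset_scope.
Local Open Scope ring_scope.

(* It suffices to go from t to t + 1 and from m to m + 1.  Perturb S slightly so
   that its points get pairwise distinct heights along the normal of one fixed
   halfspace H_0, while no strict inequality along any normal of the family is
   reversed; then every subset of S cut out by an H-region is also cut out of
   the perturbed set by some H-region.  Colour the perturbed set by hypothesis, and colour a
   (t+1)-tuple by the colour of its t lowest points.  If a region contains
   m + 1 points of S, intersecting it with a translate of H_0 removes exactly
   its highest point z, so the corresponding region of the perturbed set
   contains m points, hence a t-tuple of any prescribed colour.  Its preimage T
   lies in the original region below z, so z together with T is a (t+1)-tuple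
   of that colour whose t lowest points are T.  Without halfspaces the only
   region is the whole space and any fixed point can play z. *)

Section SeqArgmax.
Context {disp : Order.disp_t} {O : orderType disp}.
Local Open Scope order_scope.

Lemma exists_argmax_seq (T : eqType) (f : T -> O) (s : seq T) : s != [::] ->
  exists2 z, z \in s & {in s, forall w, f w <= f z}.
Proof.
elim: s => [//|a s IHs] _; have [-> | /IHs [z zs z_max]] := eqVneq s [::].
  by exists a => [|w]; rewrite ?mem_seq1 // => /eqP ->.
have [fza | faz] := leP (f z) (f a).
  exists a; rewrite ?mem_head // => w; rewrite in_cons => /predU1P [-> //|/z_max].
  by move/le_trans; apply.
exists z; first by rewrite in_cons zs orbT.
by move=> w; rewrite in_cons => /predU1P [->|/z_max] //; apply: ltW.
Qed.

End SeqArgmax.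

Section Thresholds.
Variable R : realFieldType.

Lemma separating_threshold (A B : seq R) : {in A & B, forall u w, u < w} ->
  exists th, {in A, forall u, u < th} /\ {in B, forall w, th < w}.
Proof.
(* The default values make [a < b] hold even when [A] or [B] is empty. *)
move=> AB; pose ubA := \big[Order.max/0]_(u <- A) u.
pose b := \big[Order.min/ubA + 1]_(w <- B | w \in B) w.
pose a := \big[Order.max/b - 1]_(u <- A | u \in A) u.
have b_le w : w \in B -> b <= w by move=> wB; apply: ge_bigmin_seq.
have a_ge u : u \in A -> u <= a by move=> uA; apply: le_bigmax_seq.
have a_lt_b : a < b.
  apply: bigmax_lt => [|u uA]; first by rewrite gtrBl ltr01.
  apply: lt_bigmin => [|w wB]; last exact: AB.
  have : u <= ubA by apply: le_bigmax_seq.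
  lra.
exists ((a + b) / 2); split => [u /a_ge | w /b_le]; lra.
Qed.

Definition small_enough (P : R -> Prop) :=
  exists2 e : R, 0 < e & forall e', 0 < e' -> e' <= e -> P e'.

Lemma small_enough_all (T : eqType) (s : seq T) (P : T -> R -> Prop) :
  (forall q, q \in s -> small_enough (P q)) ->
  small_enough (fun e => forall q, q \in s -> P q e).
Proof.
elim: s => [|a s IHs] Ps; first by exists 1.
have [e1 e1_gt0 He1] := Ps a (mem_head _ _).
have [e2 e2_gt0 He2] := IHs (fun q qs => Ps q (mem_behead (s := a :: s) qs)).
exists (Order.min e1 e2) => [|e' e'_gt0]; first by rewrite lt_min e1_gt0.
rewrite le_min => /andP [e'1 e'2] q; rewrite in_cons => /predU1P [-> | qs].
  exact: He1.
exact: He2.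
Qed.

Lemma small_enough_mul_lt (c g : R) : 0 < g -> small_enough (fun e => e * c < g).
Proof.
move=> g_gt0; have c1_gt0 : 0 < `|c| + 1 by rewrite ltr_wpDl.
exists (g / (`|c| + 1)) => [|e e_gt0 e_le]; first exact: divr_gt0.
have gE : g = g / (`|c| + 1) * (`|c| + 1) by rewrite divfK ?gt_eqF.
have e_c : e * c <= e * `|c| by rewrite ler_pM2l ?ler_norm.
have e_abs : e * `|c| <= g / (`|c| + 1) * `|c| by apply: ler_wpM2r.
rewrite gE; nra.
Qed.
End Thresholds.

Section LowestPoints.
Context {disp : Order.disp_t} {O : porderType disp} {K : choiceType} (f : K -> O).
Local Open Scope order_scope.

Definition lowest (n : nat) (T : {fset K}) : {fset K} :=
  [fset x in T | (#|` [fset y in T | (f y < f x)%O]| < n)%N].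

Lemma lowest_fsetU1 n z T : #|` T| = n -> {in T, forall x, f x < f z} ->
  lowest n (z |` T) = T.
Proof.
move=> T_card z_top; apply/fsetP => x; rewrite !inE.
have [xT | xNT] := boolP (x \in T); rewrite ?orbT /=.
  have below_x : [fset y in z |` T | f y < f x] `<=` T `\ x.
    apply/fsubsetP => y; rewrite !inE => /andP [/predU1P [-> | yT] lt_yx].
      by have := lt_trans lt_yx (z_top x xT); rewrite ltxx.
    by rewrite yT andbT; apply: contraTneq lt_yx => ->; rewrite ltxx.
  have := fsubset_leq_card below_x; rewrite -T_card (cardfsD1 x T) xT; lia.
rewrite orbF; apply/andP => -[/eqP xz]; subst x; apply/negP; rewrite -leqNgt.
have below_z : T `<=` [fset y in z |` T | f y < f z].
  by apply/fsubsetP => y yT; rewrite !inE yT orbT z_top.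
by rewrite -T_card fsubset_leq_card.
Qed.

End LowestPoints.

Lemma fsubset_imfset_preim (K V : choiceType) (g : K -> V) (A : {fset K})
    (B : {fset V}) :
  B `<=` g @` A -> exists2 C : {fset K}, C `<=` A & g @` C = B.
Proof.
move=> BA; exists [fset x in A | g x \in B]; first exact: fset_sub.
apply/fsetP => y; apply/imfsetP/idP => [[x /= + ->] | yB].
  by rewrite !inE => /andP [].
move: (fsubsetP BA y yB) => /imfsetP [x /= xA yE].
by exists x; rewrite // !inE xA -yE.
Qed.

Section DotProduct.
Variables (R : realType) (d : nat).
Implicit Types (a x y : 'rV[R]_d).

Lemma dotvD a x y : dotv a (x + y) = dotv a x + dotv a y.
Proof. by rewrite /dotv -big_split /=; apply: eq_bigr => j _; rewrite mxE mulrDr. Qed.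

Lemma dotvZ a (c : R) x : dotv a (c *: x) = c * dotv a x.
Proof. by rewrite /dotv mulr_sumr; apply: eq_bigr => j _; rewrite mxE mulrCA. Qed.

Lemma dotvB a x y : dotv a (x - y) = dotv a x - dotv a y.
Proof. by rewrite /dotv -sumrB; apply: eq_bigr => j _; rewrite !mxE mulrBr. Qed.

Lemma dotvv_gt0 a : a != 0 -> 0 < dotv a a.
Proof.
move=> a_neq0; rewrite lt_def sumr_ge0 ?andbT => [|j _]; last by rewrite -expr2 sqr_ge0.
apply: contraNN a_neq0 => /eqP/psumr_eq0P a2_eq0; apply/eqP/matrixP => i j.
rewrite (ord1 i) !mxE; apply/eqP; rewrite -sqrf_eq0 expr2 a2_eq0 // => l _.
by rewrite -expr2 sqr_ge0.
Qed.

Lemma exists_perturbation (I : finType) (a : I -> 'rV[R]_d) (i0 : I)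
    (S : {fset 'rV[R]_d}) : a i0 != 0 ->
  exists psi : 'rV[R]_d -> 'rV[R]_d,
    (forall i, {in S &, {homo psi : x y / dotv (a i) x < dotv (a i) y}}) /\
    {in S &, injective (fun x => dotv (a i0) (psi x))}.
Proof.
move=> a0_neq0; pose b := a i0; pose rk x : R := (index x S)%:R.
have [del del_gt0 del_small] : small_enough (fun del => forall i, i \in enum I ->
    forall x, x \in S -> forall y, y \in S -> dotv (a i) x < dotv (a i) y ->
    del * ((rk x - rk y) * dotv (a i) b) < dotv (a i) y - dotv (a i) x).
  apply: small_enough_all => i _; apply: small_enough_all => x _.
  apply: small_enough_all => y _.
  have [lt_xy | _] := ltP (dotv (a i) x) (dotv (a i) y); last by exists 1.
  have gap_gt0 : 0 < dotv (a i) y - dotv (a i) x by rewrite subr_gt0.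
  have [e e_gt0 e_small] := small_enough_mul_lt ((rk x - rk y) * dotv (a i) b) gap_gt0.
  by exists e => // e' e'_gt0 e'_le _; apply: e_small.
(* Shifting the j-th point of S by j * del along b separates points of equal
   height along b; del is small enough that no strict inequality flips. *)
pose psi x := x + (del * rk x) *: b.
have dot_psi i x : dotv (a i) (psi x) = dotv (a i) x + del * rk x * dotv (a i) b.
  by rewrite dotvD dotvZ.
have psi_mono i : {in S &, {homo psi : x y / dotv (a i) x < dotv (a i) y}}.
  move=> x y xS yS lt_xy; rewrite !dot_psi.
  have := del_small del del_gt0 (lexx _) i (mem_enum _ _) x xS y yS lt_xy; lra.
exists psi; split => // x y xS yS /= eq_psi.
have eq_b : dotv b x = dotv b y.
  apply/eqP; rewrite eq_le !leNgt; apply/andP; split; apply/negP.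
    by move/(psi_mono i0 y x yS xS); rewrite eq_psi ltxx.
  by move/(psi_mono i0 x y xS yS); rewrite eq_psi ltxx.
move: eq_psi; rewrite !dot_psi -/b eq_b => /addrI.
move=> /(mulIf (lt0r_neq0 (dotvv_gt0 a0_neq0))) /(mulfI (lt0r_neq0 del_gt0)).
by move/eqP; rewrite eqr_nat => /eqP; apply: index_inj.
Qed.

Lemma in_translate_lt (H : halfspace R d) v x y :
  in_translate H v x -> ~~ in_translate H v y ->
  dotv (hs_normal H) x < dotv (hs_normal H) y.
Proof.
rewrite /in_translate /in_hs !dotvB; case: (hs_strict H) => x_in.
  by rewrite -leNgt => y_out; lra.
by rewrite -ltNge => y_out; lra.
Qed.

Lemma exists_translate_separating (H : halfspace R d) (A B : seq 'rV[R]_d) :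
  proper_hs H ->
  {in A & B, forall x y, dotv (hs_normal H) x < dotv (hs_normal H) y} ->
  exists v, {in A, forall x, in_translate H v x} /\
            {in B, forall y, ~~ in_translate H v y}.
Proof.
move=> a_neq0 AB; set a := hs_normal H; have aa_gt0 := dotvv_gt0 a_neq0.
have /separating_threshold [th [A_lt B_gt]] :
    {in map (dotv a) A & map (dotv a) B, forall u w, u < w}.
  by move=> _ _ /mapP [x xA ->] /mapP [y yB ->]; apply: AB.
exists (((th - hs_bound H) / dotv a a) *: a).
have dot_sub y : dotv a (y - ((th - hs_bound H) / dotv a a) *: a) =
                 dotv a y - th + hs_bound H.
  by rewrite dotvB dotvZ divfK ?gt_eqF //; ring.
rewrite /in_translate /in_hs -/a.
split=> [x /(map_f (dotv a))/A_lt | y /(map_f (dotv a))/B_gt]; rewrite dot_sub.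
  by case: (hs_strict H); lra.
by case: (hs_strict H); rewrite -?leNgt -?ltNge; lra.
Qed.

End DotProduct.

Section Regions.
Variables (R : realType) (d h : nat) (Hs : 'I_h -> halfspace R d).
Implicit Types (S : {fset 'rV[R]_d}) (reg : seq ('I_h * 'rV[R]_d)).

Lemma in_region_cons p reg x :
  in_region Hs (p :: reg) x = in_translate (Hs p.1) p.2 x && in_region Hs reg x.
Proof. by []. Qed.

Lemma pts_in_nil S : pts_in Hs [::] S = S.
Proof. by apply/fsetP => x; rewrite !inE /in_region /= andbT. Qed.

Lemma pts_in_sub S reg : pts_in Hs reg S `<=` S.
Proof. exact: fset_sub. Qed.

Lemma pts_in_imfset S reg (psi : 'rV[R]_d -> 'rV[R]_d) :
  pts_in Hs reg (psi @` S) = psi @` [fset x in S | in_region Hs reg (psi x)].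
Proof.
apply/fsetP => y; rewrite inE.
apply/andP/imfsetP => [[/imfsetP [x /= xS ->] x_in] | [x /=]].
  by exists x; rewrite // !inE xS.
by rewrite !inE => /andP [xS x_in] ->; split; first exact: in_imfset.
Qed.

Lemma good_coloring_succ (k t : nat) (m : int) S S' (psi : 'rV[R]_d -> 'rV[R]_d)
    (phi : 'rV[R]_d -> R) (col : {fset 'rV[R]_d} -> 'I_k) :
  0 <= m -> {in S &, injective psi} ->
  (forall reg, pts_in Hs reg S != fset0 ->
     exists z, [/\ z \in pts_in Hs reg S,
       {in pts_in Hs reg S, forall w, w != z -> phi w < phi z} &
       exists reg2, pts_in Hs reg2 S' = psi @` (pts_in Hs reg S `\ z)]) ->
  good_coloring Hs t m S' col ->
  good_coloring Hs t.+1 (m + 1) S (fun T => col (psi @` lowest phi t T)).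
Proof.
move=> m_ge0 psi_inj drop_top col_good reg P_card c.
move/(_ reg): drop_top; set P := pts_in Hs reg S in P_card * => drop_top.
have PS : P `<=` S := pts_in_sub S reg.
have P_reg : {in P, forall x, in_region Hs reg x} by move=> x; rewrite !inE => /andP [].
clearbody P.
have P_neq0 : P != fset0 by rewrite -cardfs_gt0; lia.
have [z [zP z_top [reg2 reg2E]]] := drop_top P_neq0.
have psi_inj_Pz : {in P `\ z &, injective psi}.
  move=> x y /fsetD1P [_ /(fsubsetP PS) xS] /fsetD1P [_ /(fsubsetP PS) yS].
  exact: psi_inj.
have [|Ts [Ts_sub Ts_card Ts_reg Ts_col]] := col_good reg2 _ c.
  rewrite reg2E card_in_imfset //=; move: P_card.
  by rewrite (cardfsD1 z P) zP add1n; set n := #|` P `\ z|; lia.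
have /fsubset_imfset_preim [T T_sub TE] : Ts `<=` psi @` (P `\ z).
  by rewrite -reg2E; apply/fsubsetP => y yTs; rewrite !inE Ts_reg // (fsubsetP Ts_sub).
have T_card : #|` T| = t.
  by rewrite -Ts_card -TE card_in_imfset //; apply: sub_in2 psi_inj_Pz; apply/fsubsetP.
have T_P x : x \in T -> x \in P /\ x != z.
  by move/(fsubsetP T_sub)/fsetD1P => [].
exists (z |` T); split.
- apply/fsubsetP => x /fset1UP [-> | /T_P [/(fsubsetP PS) //]].
  exact: (fsubsetP PS).
- by rewrite cardfsU1 T_card; case: (boolP (z \in T)) => // /T_P [_]; rewrite eqxx.
- by move=> x /fset1UP [-> | /T_P [xP _]]; apply: P_reg.
- by rewrite lowest_fsetU1 // ?TE // => x /T_P [xP xz]; apply: z_top.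
Qed.

Lemma coloring_property_m_gt0 k t (m : int) : coloring_property Hs k t m ->
  (0 < k)%N -> (0 < t)%N -> 0 < m.
Proof.
move=> col_prop k_gt0 t_gt0; rewrite ltNge; apply/negP => m_le0.
have [col col_good] := col_prop fset0.
have [|T [T_sub T_card _ _]] := col_good [::] _ (Ordinal k_gt0); first by lia.
by move: T_sub T_card; rewrite fsubset0 => /eqP ->; rewrite cardfs0; lia.
Qed.

Lemma coloring_property_succ_no_halfspace k t (m : int) : h = 0%N -> 0 <= m ->
  coloring_property Hs k t m -> coloring_property Hs k t.+1 (m + 1).
Proof.
move=> h0 m_ge0 col_prop S.
have [z0 z0S] : exists z0, S != fset0 -> z0 \in S.
  by case: (fset_0Vmem S) => [-> | [z zS]]; [exists 0; rewrite eqxx | exists z].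
have [col col_good] := col_prop (S `\ z0).
have reg_nil reg : reg = [::].
  by case: reg => // -[i v] l; have := ltn_ord i; rewrite {2}h0.
eexists; apply: (good_coloring_succ (psi := id) (phi := fun x => (x == z0)%:R))
  m_ge0 _ _ col_good => [x y _ _ // | reg].
rewrite (reg_nil reg) pts_in_nil => /z0S z0S'; exists z0; split => //.
  by move=> w _ /negbTE ->; rewrite eqxx ltr01.
by exists [::]; rewrite pts_in_nil imfset_id.
Qed.

Hypothesis Hs_proper : forall i, proper_hs (Hs i).

Lemma region_transfer S (psi : 'rV[R]_d -> 'rV[R]_d) :
  (forall i, {in S &, {homo psi : x y /
     dotv (hs_normal (Hs i)) x < dotv (hs_normal (Hs i)) y}}) ->
  forall reg, exists reg',
    {in S, forall x, in_region Hs reg' (psi x) = in_region Hs reg x}.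
Proof.
move=> psi_mono; elim=> [|[i v] reg [reg' reg'E]]; first by exists [::].
pose inside := [seq psi x | x <- S & in_translate (Hs i) v x].
pose outside := [seq psi y | y <- S & ~~ in_translate (Hs i) v y].
have [|v' [v'_in v'_out]] :=
  exists_translate_separating (A := inside) (B := outside) (Hs_proper i).
  move=> _ _ /mapP [x + ->] /mapP [y + ->]; rewrite !mem_filter.
  move=> /andP [x_in xS] /andP [y_out yS].
  exact: psi_mono (in_translate_lt x_in y_out).
exists ((i, v') :: reg') => x xS; rewrite !in_region_cons reg'E //.
congr (_ && _); have [x_in | x_out] := boolP (in_translate (Hs i) v x).
  by apply: v'_in; apply: map_f; rewrite mem_filter x_in.
by apply/negbTE/v'_out; apply: map_f; rewrite mem_filter x_out.
Qed.

Lemma exists_region_drop_top (i0 : 'I_h) S (psi : 'rV[R]_d -> 'rV[R]_d) reg z :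
  (forall i, {in S &, {homo psi : x y /
     dotv (hs_normal (Hs i)) x < dotv (hs_normal (Hs i)) y}}) ->
  z \in pts_in Hs reg S ->
  {in pts_in Hs reg S, forall w, w != z ->
     dotv (hs_normal (Hs i0)) (psi w) < dotv (hs_normal (Hs i0)) (psi z)} ->
  exists reg2, pts_in Hs reg2 (psi @` S) = psi @` (pts_in Hs reg S `\ z).
Proof.
move=> psi_mono zP z_top; have [reg' reg'E] := region_transfer psi_mono reg.
have [|v [v_in v_out]] := exists_translate_separating
  (A := [seq psi x | x <- pts_in Hs reg S `\ z]) (B := [:: psi z]) (Hs_proper i0).
  move=> u w /mapP [x /fsetD1P [xz xP] ->]; rewrite mem_seq1 => /eqP ->.
  exact: z_top.
exists ((i0, v) :: reg'); rewrite pts_in_imfset.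
suff -> : [fset x in S | in_region Hs ((i0, v) :: reg') (psi x)] =
          pts_in Hs reg S `\ z by [].
apply/fsetP => x; rewrite !inE in_region_cons.
have [xS | _] := boolP (x \in S); rewrite ?andbF //= reg'E //.
have [-> | xz] := eqVneq x z; first by rewrite (negbTE (v_out _ (mem_head _ _))).
case x_reg: (in_region Hs reg x); rewrite ?andbF //= andbT.
by apply: v_in; apply: map_f; rewrite !inE xz xS x_reg.
Qed.

Lemma coloring_property_succ_with_halfspace k t (m : int) (i0 : 'I_h) : 0 <= m ->
  coloring_property Hs k t m -> coloring_property Hs k t.+1 (m + 1).
Proof.
move=> m_ge0 col_prop S.
have [psi [psi_mono phi_inj]] :=
  exists_perturbation (a := fun i => hs_normal (Hs i)) S (Hs_proper i0).
pose phi x := dotv (hs_normal (Hs i0)) (psi x).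
have [col col_good] := col_prop (psi @` S).
eexists; apply: (good_coloring_succ (psi := psi) (phi := phi)) m_ge0 _ _ col_good.
  by move=> x y xS yS psi_xy; apply: phi_inj => //=; rewrite /= psi_xy.
move=> reg; set P := pts_in Hs reg S => P_neq0.
have [|z zP z_max] := exists_argmax_seq phi (s := P).
  apply/eqP => P_nil; move: P_neq0.
  by rewrite -cardfs_eq0 -[#|` P|]/(size (enum_fset P)) P_nil.
have PS : P `<=` S := pts_in_sub S reg.
have z_top : {in P, forall w, w != z -> phi w < phi z}.
  move=> w wP wz; rewrite lt_def z_max // andbT.
  by apply: contra wz => /eqP/phi_inj -> //; apply: (fsubsetP PS).
by exists z; split => //; apply: (exists_region_drop_top (i0 := i0)).
Qed.

Lemma coloring_property_succ k t (m : int) : (0 < k)%N -> (0 < t)%N ->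
  coloring_property Hs k t m -> coloring_property Hs k t.+1 (m + 1).
Proof.
move=> k_gt0 t_gt0 col_prop.
have m_ge0 := ltW (coloring_property_m_gt0 col_prop k_gt0 t_gt0).
case: (posnP h) => [h0 | h_gt0]; first exact: coloring_property_succ_no_halfspace.
exact: (coloring_property_succ_with_halfspace (Ordinal h_gt0)).
Qed.

Lemma coloring_property_add k t (m : int) n : (0 < k)%N -> (0 < t)%N ->
  coloring_property Hs k t m -> coloring_property Hs k (t + n) (m + n%:Z).
Proof.
move=> k_gt0 t_gt0 col_prop; elim: n => [|n IHn]; first by rewrite addn0 addr0.
rewrite addnS -[n.+1]addn1 PoszD addrA.
by apply: coloring_property_succ; rewrite ?addn_gt0 ?t_gt0.
Qed.

End Regions.

Theorem theorem7 (R : realType) (d h : nat) (Hs : 'I_h -> halfspace R d)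
  (k t : nat) (m : int) :
  (forall i, proper_hs (Hs i)) ->
  (0 < k)%N -> (0 < t)%N ->
  @coloring_property R d h Hs k t m ->
  forall t' : nat, (t < t')%N ->
    @coloring_property R d h Hs k t' (m + t'%:Z - t%:Z).
Proof.
move=> Hs_proper k_gt0 t_gt0 col_prop t' /ltnW le_tt'.
have := coloring_property_add Hs_proper (t' - t) k_gt0 t_gt0 col_prop.
by rewrite subnKC // -subzn // addrA.
Qed.
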